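(* Let $p$ be a prime, and let $U,V$ be unitary operators on a finite-dimensional complex Hilbert space with $U^p=V^p=I$. Suppose $UV=\zeta VU$ for some $p$th root of unity $\zeta\ne1$. Then $\|P_UP_V\|_{\mathrm{op}}\le p^{-1/2}$, where $P_U=\frac1p\sum_{a=0}^{p-1}U^a$ and $P_V=\frac1p\sum_{a=0}^{p-1}V^a$.
   Context: $P_U$ is the orthogonal projection onto the fixed space of $U$; $\|\cdot\|_{\mathrm{op}}$ is the operator norm. *)

(* Complex scalars: any numClosedFieldType C (e.g. algC, or
   complex R for R : rcfType, which includes the usual complex numbers). *)
From HB Require Import structures.
From mathcomp Require Import all_boot all_order all_algebra.
Set Implicit Arguments. Unset Strict Implicit. Unset Printing Implicit Defensive.
Import Order.TTheory GRing.Theory Num.Theory.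
Local Open Scope ring_scope.

Section Defs.
Variable C : numClosedFieldType.

Definition adjmx n (A : 'M[C]_n) : 'M[C]_n := (map_mx Num.conj A)^T.

Definition unitary n (A : 'M[C]_n) : Prop := A *m adjmx A = 1%:M.

Definition vnorm n (x : 'cV[C]_n) : C := sqrtC (\sum_i `|x i 0| ^+ 2).

(* "||A||_op <= c": by definition of the operator norm as a supremum,
   ||A||_op <= c iff ||A x|| <= c ||x|| for every vector x. *)
Definition opnorm_le n (A : 'M[C]_n) (c : C) : Prop :=
  forall x : 'cV[C]_n, vnorm (A *m x) <= c * vnorm x.

Definition avgproj n (p : nat) (U : 'M[C]_n) : 'M[C]_n :=
  (p%:R)^-1 *: \sum_(a < p) U ^+ a.
End Defs.

From mathcomp Require Import all_boot all_order all_algebra.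
Set Implicit Arguments. Unset Strict Implicit. Unset Printing Implicit Defensive.
Import Order.TTheory GRing.Theory Num.Theory.
Local Open Scope ring_scope.
Local Open Scope sesquilinear_scope.

(* If W^p = 1 then W fixes the average P_W of its powers on both sides, so
   P_W is idempotent, and it is self-adjoint when W is unitary.  Powers of U
   twist V by powers of zeta, and zeta^a <> 1 for 0 < a < p because p is
   prime; hence P_V U^a P_V = 0 for those a, and P_V P_U P_V = P_V / p.
   Therefore (P_U P_V)^* (P_U P_V) = P_V / p, and
   ||P_U P_V x||^2 = ||P_V x||^2 / p <= ||x||^2 / p. *)

Section PowerSums.
Variable R : pzSemiRingType.

Lemma mul_sum_expr (W : R) p : W ^+ p = 1 ->
  W * \sum_(a < p) W ^+ a = \sum_(a < p) W ^+ a.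
Proof.
case: p => [|p] Wp; first by rewrite !big_ord0 mulr0.
rewrite mulr_sumr; under eq_bigr do rewrite -exprS.
rewrite big_ord_recr big_ord_recl /= Wp expr0 addrC.
by congr (_ + _); apply: eq_bigr => i _.
Qed.

Lemma sum_expr_mul (W : R) p : W ^+ p = 1 ->
  (\sum_(a < p) W ^+ a) * W = \sum_(a < p) W ^+ a.
Proof.
move=> Wp; rewrite -[RHS](mul_sum_expr Wp) mulr_suml mulr_sumr.
by apply: eq_bigr => a _; rewrite -exprSr exprS.
Qed.

End PowerSums.

Section Averaging.
Variables (C : numClosedFieldType) (n p : nat).
Implicit Types W M X : 'M[C]_n.

Lemma avgproj_mul_fixed M X : (0 < p)%N ->
  M *m X = X -> avgproj p M *m X = X.
Proof.
move=> p_gt0 MX; have MkX k : M ^+ k *m X = X.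
  by elim: k => [|k IHk]; rewrite ?mul1mx // exprSr mulmxE -mulrA -mulmxE MX.
rewrite /avgproj -scalemxAl mulmx_suml; under eq_bigr do rewrite MkX.
rewrite sumr_const card_ord -scaler_nat scalerA mulVf ?scale1r //.
by rewrite pnatr_eq0 -lt0n.
Qed.

Lemma mul_avgprojl W : W ^+ p = 1 -> W *m avgproj p W = avgproj p W.
Proof. by move=> Wp; rewrite /avgproj -scalemxAr mulmxE mul_sum_expr. Qed.

Lemma mul_avgprojr W : W ^+ p = 1 -> avgproj p W *m W = avgproj p W.
Proof. by move=> Wp; rewrite /avgproj -scalemxAl mulmxE sum_expr_mul. Qed.

Lemma avgproj_idem W : (0 < p)%N -> W ^+ p = 1 ->
  avgproj p W *m avgproj p W = avgproj p W.
Proof. by move=> p_gt0 Wp; rewrite avgproj_mul_fixed // mul_avgprojl. Qed.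

End Averaging.

Section TwistedCommutation.
Variables (R : fieldType) (n : nat).
Implicit Types P W X : 'M[R]_n.

Lemma expr_qcomm W X (z : R) : W *m X = z *: (X *m W) ->
  forall a, W ^+ a *m X = z ^+ a *: (X *m W ^+ a).
Proof.
move=> WX; elim=> [|a IHa]; first by rewrite !expr0 scale1r mulmx1 mul1mx.
rewrite {1}exprS -mulmxE -mulmxA IHa -scalemxAr (mulmxA W) WX -scalemxAl scalerA.
by rewrite -exprSr -mulmxA mulmxE -exprS.
Qed.

Lemma qcomm_sandwich_eq0 P X W (z : R) : P *m W = P -> W *m P = P ->
  X *m W = z *: (W *m X) -> z != 1 -> P *m X *m P = 0.
Proof.
move=> PW WP XW z1.
have /eqP : P *m X *m P = z *: (P *m X *m P).
  rewrite -[Q in _ *m Q = _]WP mulmxA -(mulmxA P) XW.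
  by rewrite -scalemxAr -scalemxAl mulmxA PW.
rewrite -subr_eq0 -{1}[P *m X *m P]scale1r -scalerBl scaler_eq0 subr_eq0.
by rewrite eq_sym (negbTE z1) => /eqP.
Qed.

End TwistedCommutation.

Lemma prime_root_expr_neq1 (R : idomainType) p (z : R) a :
  prime p -> z ^+ p = 1 -> z != 1 -> (0 < a < p)%N -> z ^+ a != 1.
Proof.
move=> pr zp z1 /andP[a0 ap].
have [m zm mp] := prim_order_exists (prime_gt0 pr) zp.
have m1 : m != 1%N.
  by apply: contraNneq z1 => m1; rewrite -[z]expr1 -m1 prim_expr_order.
have m_eq_p : m = p.
  by case/primeP: pr => _ /(_ m mp); rewrite (negbTE m1) => /eqP.
rewrite {}m_eq_p in zm.
rewrite -(prim_order_dvd zm); apply: contraTN ap => /(dvdn_leq a0).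
by rewrite -leqNgt.
Qed.

Lemma avgproj_sandwich (C : numClosedFieldType) n p (P U V : 'M[C]_n) (zeta : C) :
  prime p -> zeta ^+ p = 1 -> zeta != 1 -> U *m V = zeta *: (V *m U) ->
  P *m V = P -> V *m P = P -> P *m P = P ->
  P *m avgproj p U *m P = p%:R^-1 *: P.
Proof.
move=> pr zp z1 UV PV VP PP; have p_gt0 := prime_gt0 pr.
rewrite /avgproj -scalemxAr -scalemxAl mulmx_sumr mulmx_suml.
rewrite (bigD1 (Ordinal p_gt0)) //= expr0 mulmx1 PP big1 ?addr0 // => a a_neq0.
apply: qcomm_sandwich_eq0 PV VP (expr_qcomm UV a) _.
apply: prime_root_expr_neq1 pr zp z1 _; rewrite ltn_ord andbT lt0n.
by apply: contraNneq a_neq0 => a0; apply/eqP/val_inj.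
Qed.

Section Adjoint.
Variable C : numClosedFieldType.

Lemma adjmxE n (A : 'M[C]_n) : adjmx A = A^t*.
Proof. exact: map_trmx. Qed.

Lemma trmxC_mul m k l (A : 'M[C]_(m, k)) (B : 'M[C]_(k, l)) :
  (A *m B)^t* = B^t* *m A^t*.
Proof. by rewrite trmx_mul map_mxM. Qed.

Lemma trmxC1 n : (1%:M : 'M[C]_n)^t* = 1%:M.
Proof. by rewrite trmx1 map_mx1. Qed.

Lemma trmxCX n (A : 'M[C]_n) k : (A ^+ k)^t* = A^t* ^+ k.
Proof.
elim: k => [|k IHk]; first by rewrite !expr0 trmxC1.
by rewrite exprS -mulmxE trmxC_mul IHk mulmxE exprSr.
Qed.

Lemma unitary_trmxC_mul n (W : 'M[C]_n) : unitary W -> W^t* *m W = 1%:M.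
Proof. by rewrite /unitary adjmxE => /mulmx1C. Qed.

Lemma trmxC_avgproj n p (W : 'M[C]_n) : (0 < p)%N -> unitary W -> W ^+ p = 1 ->
  (avgproj p W)^t* = avgproj p W.
Proof.
move=> p_gt0 uW Wp.
have adjP : (avgproj p W)^t* = avgproj p (W^t*).
  rewrite linearZ /= map_mxZ fmorphV rmorph_nat; congr (_ *: _).
  by rewrite !raddf_sum; apply: eq_bigr => a _; apply: trmxCX.
have adjW_P : W^t* *m avgproj p W = avgproj p W.
  by rewrite -[in LHS](mul_avgprojl Wp) mulmxA unitary_trmxC_mul // mul1mx.
have adjPP : (avgproj p W)^t* *m avgproj p W = avgproj p W.
  by rewrite adjP avgproj_mul_fixed.
by rewrite -{1}adjPP trmxC_mul trmxCK adjPP.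
Qed.

End Adjoint.

Section SquaredNorm.
Variable C : numClosedFieldType.

Definition sqnorm n (x : 'cV[C]_n) : C := (x^t* *m x) 0 0.

Lemma vnormE n (x : 'cV[C]_n) : vnorm x = sqrtC (sqnorm x).
Proof.
rewrite /vnorm /sqnorm mxE; congr sqrtC; apply: eq_bigr => i _.
by rewrite normCK !mxE mulrC.
Qed.

Lemma sqnorm_ge0 n (x : 'cV[C]_n) : 0 <= sqnorm x.
Proof.
by rewrite /sqnorm mxE sumr_ge0 // => i _; rewrite !mxE mulrC -normCK exprn_ge0.
Qed.

Lemma sqnorm_mulmx m n (A : 'M[C]_(m, n)) (x : 'cV[C]_n) :
  sqnorm (A *m x) = (x^t* *m (A^t* *m A) *m x) 0 0.
Proof. by rewrite /sqnorm trmxC_mul !mulmxA. Qed.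

Lemma sqnorm_proj_le n (Q : 'M[C]_n) (x : 'cV[C]_n) :
  Q^t* = Q -> Q *m Q = Q -> sqnorm (Q *m x) <= sqnorm x.
Proof.
move=> adjQ QQ; have gram_compl : (1%:M - Q)^t* *m (1%:M - Q) = 1%:M - Q.
  by rewrite !raddfB /= trmxC1 adjQ mulmx1 mulmxBl mul1mx QQ subrr subr0.
have -> : sqnorm x = sqnorm (Q *m x) + sqnorm ((1%:M - Q) *m x).
  rewrite !sqnorm_mulmx gram_compl adjQ QQ mulmxBr mulmx1 mulmxBl.
  by rewrite [X in _ + X]mxE [X in _ + (_ + X)]mxE addrC subrK.
by rewrite lerDl sqnorm_ge0.
Qed.

Lemma opnorm_le_gram n (A Q : 'M[C]_n) (c : C) : 0 <= c ->
  Q^t* = Q -> Q *m Q = Q -> A^t* *m A = c *: Q -> opnorm_le A (sqrtC c).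
Proof.
move=> c_ge0 adjQ QQ gramA x.
rewrite !vnormE -sqrtCM ?nnegrE ?sqnorm_ge0 //.
rewrite ler_sqrtC ?nnegrE ?mulr_ge0 ?sqnorm_ge0 //.
have -> : sqnorm (A *m x) = c * sqnorm (Q *m x).
  by rewrite !sqnorm_mulmx gramA adjQ QQ -scalemxAr -scalemxAl mxE.
by rewrite ler_wpM2l // sqnorm_proj_le.
Qed.

End SquaredNorm.

Theorem lemma4p12 (C : numClosedFieldType) (n p : nat) (U V : 'M[C]_n)
  (zeta : C) :
  prime p ->
  unitary U -> unitary V ->
  U ^+ p = 1%:M -> V ^+ p = 1%:M ->
  zeta ^+ p = 1 -> zeta != 1 ->
  U *m V = zeta *: (V *m U) ->
  opnorm_le (avgproj p U *m avgproj p V) (sqrtC (p%:R)^-1).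
Proof.
move=> pr uU uV Up Vp zp z1 UV; have p_gt0 := prime_gt0 pr.
apply: (opnorm_le_gram (Q := avgproj p V)).
- by rewrite invr_ge0 ler0n.
- exact: trmxC_avgproj.
- exact: avgproj_idem.
rewrite trmxC_mul !trmxC_avgproj // mulmxA -(mulmxA _ _ (avgproj p U)).
rewrite avgproj_idem // (avgproj_sandwich pr zp z1 UV) //.
- exact: mul_avgprojr.
- exact: mul_avgprojl.
- exact: avgproj_idem.
Qed.
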